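(* For every $\Gamma\in F(L)$, $\operatorname{div}(u_\Gamma)=\operatorname{tr}(g-g^* )$, where $g=\partial^L_x(\partial_y(\Gamma))$ and $g\mapsto g^*$ is the linear map of $A$ reversing the order of letters in each monomial and multiplying each letter by $-1$ (i.e. $(a_1\cdots a_n)^*=(-1)^na_n\cdots a_1$).
   Context: $A=\mathbb{R}\langle x,y\rangle$; $L\subset A$ the free Lie algebra on $x,y$. $\operatorname{tr}$ is the projection $A\to A/\operatorname{span}\{ab-ba\}$. $F(L)$ is the quotient of $L\otimes L$ by the span of $a\otimes b-b\otimes a$ and $a\otimes[b,c]-[a,b]\otimes c$, regarded inside $A/\operatorname{span}\{ab-ba\}$ via $a\otimes b\mapsto\operatorname{tr}(ab)$. For $x_0\in\{x,y\}$, $\partial_{x_0}$ maps cyclic words by $\operatorname{tr}(a_1\cdots a_n)\mapsto\sum_{i:\,a_i=x_0}a_{i+1}\cdots a_n a_1\cdots a_{i-1}$. For $\Gamma\in F(L)$, $u_\Gamma$ is the derivation of $L$ with $u_\Gamma(x)=\partial_y\Gamma$, $u_\Gamma(y)=-\partial_x\Gamma$. For $l\in A$, $\partial^L_{x_0}(l)=\sum\partial^1\epsilon(\partial^2)$, where $\sum\partial^1\otimes\partial^2$ is the sum over occurrences of $x_0$ in monomials of (prefix)$\otimes$(suffix), and $\epsilon$ is the constant term. $\operatorname{div}(u)=\operatorname{tr}(\partial^L_x(u(x))+\partial^L_y(u(y)))$ for $u\in\operatorname{Der}(L)$. *)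

(* the free associative algebra A = R<x,y> is modelled by
   multinomials' monoid algebra {malg R[{fmonom bool}]} over the free monoid
   on the two letters (true = x, false = y), with R the real numbers
   (Stdlib's R, which is a MathComp realType via Rstruct). *)
From HB Require Import structures.
From mathcomp Require Import all_boot all_order all_algebra.
From mathcomp Require Import Rstruct.
From mathcomp.multinomials Require Import monalg.
From mathcomp Require Import finmap.
From Stdlib Require Import Rdefinitions.

Set Implicit Arguments.
Unset Strict Implicit.
Unset Printing Implicit Defensive.

Import GRing.Theory.
Local Open Scope ring_scope.

Definition letter := bool.
Definition lx : letter := true.
Definition ly : letter := false.

Definition A := {malg R[{fmonom letter}]}.

Definition mono (w : seq letter) : A := << FMonom w >>.

Definition X : A := mono [:: lx].
Definition Y : A := mono [:: ly].

Definition linext (f : seq letter -> A) (a : A) : A :=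
  \sum_(m <- msupp a) a@_m *: f (fmonom_val m).

(* the free Lie algebra L on x, y inside A: the smallest subspace of A
   containing x and y and closed under the commutator bracket *)
Definition bracket (a b : A) : A := a * b - b * a.

Inductive inL : A -> Prop :=
  | inL_x : inL X
  | inL_y : inL Y
  | inL_add a b : inL a -> inL b -> inL (a + b)
  | inL_scale (c : R) a : inL a -> inL (c *: a)
  | inL_bracket a b : inL a -> inL b -> inL (bracket a b).

(* span{ab - ba} and the trace map tr : A -> A/span{ab - ba};
   tr a = tr b  is expressed as  tr_eq a b *)
Definition inComm (a : A) : Prop :=
  exists s : seq (A * A), a = \sum_(p <- s) (p.1 * p.2 - p.2 * p.1).

Definition tr_eq (a b : A) : Prop := inComm (a - b).

(* Gamma (given by a representative in A) lies in F(L):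
   tr Gamma = tr (sum_i a_i b_i) with a_i, b_i in L *)
Definition inFL (G : A) : Prop :=
  exists s : seq (A * A),
    (forall p, p \in s -> inL p.1 /\ inL p.2) /\
    tr_eq G (\sum_(p <- s) p.1 * p.2).

(* cyclic derivative d_{x0}:
   tr(a_1...a_n) |-> sum_{i : a_i = x0} a_{i+1}...a_n a_1...a_{i-1} *)
Definition cycd_mono (x0 : letter) (w : seq letter) : A :=
  \sum_(i < size w | nth lx w i == x0) mono (drop i.+1 w ++ take i w).
Definition cycd (x0 : letter) : A -> A := linext (cycd_mono x0).

(* d^L_{x0}: sum over occurrences of x0 of prefix * eps(suffix) *)
Definition eps_mono (w : seq letter) : R := if w == [::] then 1 else 0.
Definition dL_mono (x0 : letter) (w : seq letter) : A :=
  \sum_(i < size w | nth lx w i == x0) eps_mono (drop i.+1 w) *: mono (take i w).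
Definition dL (x0 : letter) : A -> A := linext (dL_mono x0).

(* the derivation of A with x |-> fx, y |-> fy (restricting to the
   derivation of L when fx, fy are in L) *)
Definition der_mono (fx fy : A) (w : seq letter) : A :=
  \sum_(i < size w)
     mono (take i w) * (if nth lx w i == lx then fx else fy) * mono (drop i.+1 w).
Definition der (fx fy : A) : A -> A := linext (der_mono fx fy).

Definition uGamma (G : A) : A -> A := der (cycd ly G) (- cycd lx G).

(* div(u) = tr(d^L_x(u x) + d^L_y(u y)), given by a representative in A *)
Definition divA (u : A -> A) : A := dL lx (u X) + dL ly (u Y).

Definition star_mono (w : seq letter) : A := (-1) ^+ size w *: mono (rev w).
Definition star : A -> A := linext star_mono.

(* The anti-involution star sends every element of L to its opposite, so for
   Gamma = sum a_i b_i with a_i, b_i in L one has star Gamma = sum b_i a_i, which has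
   the same trace as Gamma; cyclic derivatives only depend on the trace, hence
   d_y (star Gamma) = d_y Gamma.  The theorem then reduces to the identity
   d^L_y (d_x a) = star (d^L_x (d_y (star a))) for all a in A: on a monomial w both
   sides sum the monomials t over the cyclic rotations x t y of w, the signs of
   star cancelling because w and t have lengths of equal parity. *)
From HB Require Import structures.
From mathcomp Require Import all_boot all_order all_algebra.
From mathcomp Require Import Rstruct.
From mathcomp.multinomials Require Import monalg.
From mathcomp Require Import finmap.
From Stdlib Require Import Rdefinitions.

Set Implicit Arguments.
Unset Strict Implicit.
Unset Printing Implicit Defensive.

Import GRing.Theory.
Local Open Scope ring_scope.

Lemma monalgUZ (c : R) (k : {fmonom letter}) : << c *g k >> = c *: (<< k >> : A).
Proof. by apply/malgP => k'; rewrite mcoeffZ !mcoeffU mulr_natr. Qed.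

Lemma mono_nil : mono [::] = 1.
Proof. by rewrite /mono -fmoneE. Qed.

Lemma mono_cat u v : mono (u ++ v) = mono u * mono v.
Proof.
rewrite /mono malgM_def fgmulUU mulr1; congr << _ >>.
by apply: val_inj; rewrite /= fmM.
Qed.

Lemma mulr_malgC (c : R) (a : A) : a * c%:MP = c *: a.
Proof.
rewrite malgM_def malgZ_def fgmulgU.
by apply/eq_bigr => k _; rewrite mulm1 mulrC.
Qed.

Lemma malg_scalerAr (c : R) (a b : A) : c *: (a * b) = a * (c *: b).
Proof. by rewrite -[c *: b]mul_malgC mulrA mulr_malgC scalerAl. Qed.

(* For a noncommutative monoid K, monalg makes {malg R[K]} only a left algebra. *)
HB.instance Definition _ := GRing.Lalgebra.on A.
HB.instance Definition _ := GRing.Lalgebra_isAlgebra.Build R A malg_scalerAr.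

Section LinearExtension.
Variable f : seq letter -> A.

Lemma linextEw (a : A) (d : {fset {fmonom letter}}) : (msupp a `<=` d)%fset ->
  linext f a = \sum_(m <- d) a@_m *: f (fmonom_val m).
Proof.
move=> le; rewrite /linext (big_fset_incl _ le) //= => m _ /mcoeff_outdom ->.
by rewrite scale0r.
Qed.

Lemma linext_is_linear : linear (linext f).
Proof.
move=> c a b; set d := (msupp a `|` msupp b)%fset.
have le_ab : (msupp (c *: a + b) `<=` d)%fset.
  exact: fsubset_trans (msuppD_le _ _) (fsetSU _ (msuppZ_le _ _)).
rewrite (linextEw le_ab) (linextEw (fsubsetUl (msupp a) (msupp b))).
rewrite (linextEw (fsubsetUr (msupp a) (msupp b))).
rewrite scaler_sumr -big_split; apply: eq_bigr => m _ /=.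
by rewrite mcoeffD mcoeffZ scalerDl scalerA.
Qed.

HB.instance Definition _ :=
  GRing.isLinear.Build R A A *:%R (linext f) linext_is_linear.

Lemma linext_mono w : linext f (mono w) = f w.
Proof.
by rewrite (linextEw (msuppU_le (x := 1))) big_seq_fset1 mcoeffUU scale1r.
Qed.

End LinearExtension.

HB.instance Definition _ x0 := GRing.Linear.on (cycd x0).
HB.instance Definition _ x0 := GRing.Linear.on (dL x0).
HB.instance Definition _ := GRing.Linear.on star.

Lemma linear_mono_ext (f g : {linear A -> A}) :
  (forall w, f (mono w) = g (mono w)) -> f =1 g.
Proof.
move=> fg a; rewrite (monalgE a) !linear_sum; apply: eq_bigr => k _.
by rewrite monalgUZ !linearZ; have := fg k; rewrite /mono fmK => ->.
Qed.

Lemma der_letter fx fy b :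
  der fx fy (mono [:: b]) = if b == lx then fx else fy.
Proof. by rewrite /der linext_mono /der_mono big_ord1 /= mono_nil mul1r mulr1. Qed.

Lemma star_monoE w : star (mono w) = (-1) ^+ size w *: mono (rev w).
Proof. exact: linext_mono. Qed.

Lemma starM a b : star (a * b) = star b * star a.
Proof.
move: a; apply: (@linear_mono_ext (star \o GRing.mulr_fun b idfun)
                                  (GRing.mull_fun (star b) star)) => u /=.
move: b; apply: (@linear_mono_ext (star \o GRing.mull_fun (mono u) idfun)
                                  (GRing.mulr_fun (star (mono u)) star)) => v /=.
rewrite -mono_cat !star_monoE -scalerAl -scalerAr -mono_cat scalerA.
by rewrite size_cat exprD mulrC rev_cat.
Qed.

Lemma star_inL a : inL a -> star a = - a.
Proof.
elim=> {a} [| |a b _ IHa _ IHb|c a _ IHa|a b _ IHa _ IHb].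
- by rewrite star_monoE scaleN1r.
- by rewrite star_monoE scaleN1r.
- by rewrite linearD /= IHa IHb opprD.
- by rewrite linearZ /= IHa scalerN.
- by rewrite /bracket linearB /= !starM IHa IHb !mulrNN opprB.
Qed.

Lemma inComm0 : inComm 0.
Proof. by exists [::]; rewrite big_nil. Qed.

Lemma inCommD a b : inComm a -> inComm b -> inComm (a + b).
Proof. by move=> [s ->] [t ->]; exists (s ++ t); rewrite big_cat. Qed.

Lemma inCommN a : inComm a -> inComm (- a).
Proof.
move=> [s ->]; exists [seq (p.2, p.1) | p <- s].
by rewrite big_map -sumrN; apply: eq_bigr => p _; rewrite opprB.
Qed.

Lemma inComm_star a : inComm a -> inComm (star a).
Proof.
move=> [s ->]; exists [seq (star p.2, star p.1) | p <- s].
by rewrite big_map linear_sum; apply: eq_bigr => p _; rewrite linearB /= !starM.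
Qed.

Lemma tr_eq_refl a : tr_eq a a.
Proof. by rewrite /tr_eq subrr; apply: inComm0. Qed.

Lemma tr_eq_sym a b : tr_eq a b -> tr_eq b a.
Proof. by move/inCommN; rewrite /tr_eq opprB. Qed.

Lemma tr_eq_trans a b c : tr_eq a b -> tr_eq b c -> tr_eq a c.
Proof. by move=> ab bc; have := inCommD ab bc; rewrite /tr_eq addrA subrK. Qed.

Lemma tr_eq_star a b : tr_eq a b -> tr_eq (star a) (star b).
Proof. by move/inComm_star; rewrite /tr_eq linearB. Qed.

Lemma tr_eq_sum_swap (s : seq (A * A)) :
  tr_eq (\sum_(p <- s) p.2 * p.1) (\sum_(p <- s) p.1 * p.2).
Proof. by exists [seq (p.2, p.1) | p <- s]; rewrite big_map -sumrB. Qed.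

Lemma inFL_tr_star G : inFL G -> tr_eq (star G) G.
Proof.
move=> [s [sL GS]].
have starS : star (\sum_(p <- s) p.1 * p.2) = \sum_(p <- s) p.2 * p.1.
  rewrite linear_sum big_seq [RHS]big_seq; apply: eq_bigr => p /sL[p1L p2L].
  by rewrite /= starM (star_inL p1L) (star_inL p2L) mulrNN.
apply: tr_eq_trans (tr_eq_star GS) _; rewrite starS.
exact: tr_eq_trans (tr_eq_sum_swap s) (tr_eq_sym GS).
Qed.

Section RotationSums.
Variables (T : Type) (V : nmodType) (F : seq T -> V).

Definition rotsum (w : seq T) : V := \sum_(0 <= i < size w) F (rot i w).

Lemma big_nat_cycle (g : nat -> V) n : g n = g 0%N ->
  \sum_(0 <= i < n) g i.+1 = \sum_(0 <= i < n) g i.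
Proof.
case: n => [|n] gn; first by rewrite !big_geq.
by rewrite big_nat_recr //= gn big_nat_recl // addrC.
Qed.

Lemma rotsum_rot1 w : rotsum (rot 1 w) = rotsum w.
Proof.
rewrite /rotsum size_rot.
rewrite -(@big_nat_cycle (fun i => F (rot i w))) ?rot_size ?rot0 //.
by apply: eq_big_nat => i /andP[_ lti]; rewrite -rotD ?addn1.
Qed.

Lemma rotsum_rot k w : rotsum (rot k w) = rotsum w.
Proof.
elim: k => [|k IHk]; first by rewrite rot0.
have [ltkw | lewk] := ltnP k (size w); last by rewrite rot_oversize // ltnW.
by rewrite -add1n rotD ?add1n // rotsum_rot1 IHk.
Qed.

Lemma rotsum_catC u v : rotsum (u ++ v) = rotsum (v ++ u).
Proof. by rewrite -rot_size_cat rotsum_rot. Qed.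

Lemma rotsum_rotr w : \sum_(0 <= i < size w) F (rotr i w) = rotsum w.
Proof.
rewrite /rotsum big_nat_rev /=.
rewrite -(@big_nat_cycle (fun i => F (rot i w))) ?rot_size ?rot0 //.
by apply: eq_big_nat => i /andP[_ lti]; rewrite add0n /rotr subKn.
Qed.

End RotationSums.

Definition dlead (x0 : letter) (v : seq letter) : A :=
  if v is a :: t then (if a == x0 then mono t else 0) else 0.

Lemma linear_rotsum (f : {linear A -> A}) (F : seq letter -> A) w :
  f (rotsum F w) = rotsum (f \o F) w.
Proof. exact: linear_sum. Qed.

Lemma cycd_monoE x0 w : cycd x0 (mono w) = rotsum (dlead x0) w.
Proof.
rewrite /cycd linext_mono /cycd_mono big_mkcond /= /rotsum big_mkord.
by apply: eq_bigr => i _; rewrite /rot (drop_nth lx (ltn_ord i)).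
Qed.

Lemma cycd_mulC x0 (u v : A) : cycd x0 (u * v) = cycd x0 (v * u).
Proof.
move: u; apply: (@linear_mono_ext (cycd x0 \o GRing.mulr_fun v idfun)
                                  (cycd x0 \o GRing.mull_fun v idfun)) => u /=.
move: v; apply: (@linear_mono_ext (cycd x0 \o GRing.mull_fun (mono u) idfun)
                                  (cycd x0 \o GRing.mulr_fun (mono u) idfun)) => v /=.
by rewrite -!mono_cat !cycd_monoE rotsum_catC.
Qed.

Lemma cycd_tr x0 a b : tr_eq a b -> cycd x0 a = cycd x0 b.
Proof.
move=> [s ab]; apply/eqP; rewrite -subr_eq0 -linearB /= ab linear_sum /=.
by rewrite big1 // => p _; rewrite linearB /= cycd_mulC subrr.
Qed.

Lemma dL_mono_nil x1 : dL x1 (mono [::]) = 0.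
Proof. by rewrite /dL linext_mono /dL_mono big_ord0. Qed.

Lemma dL_mono_rcons x1 t b :
  dL x1 (mono (rcons t b)) = if b == x1 then mono t else 0.
Proof.
rewrite /dL linext_mono /dL_mono size_rcons big_mkcond big_ord_recr /=.
rewrite nth_rcons ltnn eqxx drop_oversize ?size_rcons // /eps_mono eqxx scale1r.
rewrite -cats1 take_size_cat // big1 ?add0r => [|i _]; first by case: eqP.
rewrite -size_eq0 size_drop size_cat addn1 subSS subn_eq0 leqNgt ltn_ord /=.
by rewrite scale0r if_same.
Qed.

Lemma dL_dlead_star v :
  dL ly (dlead lx v) = (-1) ^+ size v *: star (dL lx (dlead ly (rev v))).
Proof.
case: v => [|a v]; first by rewrite /= !linear0.
case/lastP: v => [|t b].
  by case: a; rewrite /= ?dL_mono_nil !linear0 ?scaler0.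
rewrite rev_cons rev_rcons; case: a; case: b; rewrite /= ?dL_mono_rcons /=;
  rewrite ?linear0 ?scaler0 //.
rewrite star_monoE revK scalerA size_rcons size_rev -exprD addSn addSn addnn.
by rewrite !exprS mulN1r mulN1r opprK -signr_odd odd_double scale1r.
Qed.

Lemma dL_cycd_star a : dL ly (cycd lx a) = star (dL lx (cycd ly (star a))).
Proof.
move: a; apply: (@linear_mono_ext (dL ly \o cycd lx)
                   (star \o dL lx \o cycd ly \o star)) => w /=.
rewrite star_monoE !linearZ /= !cycd_monoE.
rewrite (linear_rotsum (dL ly)) (linear_rotsum (dL lx)) (linear_rotsum star).
rewrite -[in RHS]rotsum_rotr size_rev /rotsum scaler_sumr.
by apply: eq_big_nat => i _; rewrite /= dL_dlead_star rev_rot size_rot.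
Qed.

Lemma divA_uGamma G : inFL G ->
  divA (uGamma G) = dL lx (cycd ly G) - star (dL lx (cycd ly G)).
Proof.
move=> FL_G; rewrite /divA /uGamma !der_letter /= linearN /= dL_cycd_star.
by rewrite (cycd_tr _ (inFL_tr_star FL_G)).
Qed.

Theorem mainTheorem15 (G : A) :
  inFL G ->
  tr_eq (divA (uGamma G)) (dL lx (cycd ly G) - star (dL lx (cycd ly G))).
Proof. by move=> FL_G; rewrite divA_uGamma //; apply: tr_eq_refl. Qed.
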